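(* Let $J$ be a probability space, $(W^{(n)})_n$ a sequence of graphons on $J$ and $W$ a graphon on $J$ with $\|W^{(n)}-W\|_{\infty\to1}\to0$. Let $u^{(n)}(0)\in L^1(J)$ converge to $u(0)\in L^1(J)$ in $L^1$. Let $u^{(n)}(t)$ and $u(t)$ be the solutions of the Kuramoto graphon systems $\dot u_x=\int_J W^{(n)}(x,y)\sin(u_y-u_x)\,d\mu(y)$ and $\dot u_x=\int_J W(x,y)\sin(u_y-u_x)\,d\mu(y)$ with these initial conditions. Then for every $t\in\mathbb{R}$, $\lim_{n\to\infty}\|u^{(n)}(t)-u(t)\|_1=0$, and the convergence is uniform in $t$ on every compact interval $[-T,T]$.
   Context: A graphon on $J=(\Omega,\mathcal A,\mu)$ is a symmetric measurable function $\Omega\times\Omega\to[0,1]$. $\|K\|_{\infty\to1}=\sup_{\|h\|_{L^\infty}\le1}\int_J\big|\int_J K(x,y)h(y)\,d\mu(y)\big|\,d\mu(x)$. *)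

From HB Require Import structures.
From mathcomp Require Import all_boot all_order all_algebra.
From mathcomp Require Import all_classical all_reals all_analysis.
Set Implicit Arguments. Unset Strict Implicit. Unset Printing Implicit Defensive.
Import Order.TTheory GRing.Theory Num.Theory.
Import numFieldNormedType.Exports.
Local Open Scope classical_set_scope.
Local Open Scope ring_scope.

Definition graphon {d} {T : measurableType d} {R : realType} (W : T -> T -> R) : Prop :=
  [/\ measurable_fun setT (fun p : T * T => W p.1 p.2),
      (forall x y, W x y = W y x) &
      (forall x y, 0 <= W x y <= 1)].

Definition cutnorm_inf1 {d} {T : measurableType d} {R : realType}
  (mu : {measure set T -> \bar R}) (K : T -> T -> R) : \bar R :=
  ereal_sup [set (\int[mu]_x `| \int[mu]_y (K x y * h y)%:E |)%E
            | h in [set h : T -> R | measurable_fun setT h /\ forall y, `|h y| <= 1]].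

Definition kuramoto_field {d} {T : measurableType d} {R : realType}
  (mu : {measure set T -> \bar R}) (W : T -> T -> R) (v : T -> R) (x : T) : R :=
  fine (\int[mu]_y (W x y * sin (v y - v x))%:E).

Definition L1dist {d} {T : measurableType d} {R : realType}
  (mu : {measure set T -> \bar R}) (f g : T -> R) : \bar R :=
  (\int[mu]_x (`|f x - g x|)%:E)%E.

Definition kuramoto_solution {d} {T : measurableType d} {R : realType}
  (mu : {measure set T -> \bar R}) (W : T -> T -> R) (u : R -> T -> R) : Prop :=
  (forall t, mu.-integrable setT (fun x => (u t x)%:E)) /\
  (forall t, (L1dist mu (fun x => (u (t + h) x - u t x) / h)
                        (kuramoto_field mu W (u t))) @[h --> 0^']
             --> 0%E).

(* Write g(t) = ||u^(n)(t) - u(t)||_1 and F_W(v)(x) = \int W(x,y) sin(v y - v x) dy.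
   Expanding sin(v y - v x) = sin(v y) cos(v x) - cos(v y) sin(v x) isolates the
   integrals \int (W1 - W2)(x,y) sin(v y) dy and \int (W1 - W2)(x,y) cos(v y) dy,
   which the norm ||W1 - W2||_{oo->1} controls, while sin is 1-Lipschitz; hence
   ||F_W1(v) - F_W2(w)||_1 <= 2 ||W1 - W2||_{oo->1} + 2 ||v - w||_1.
   Comparing difference quotients with these fields, g has two-sided Dini
   derivatives bounded by 2 g + 2 ||W^(n) - W||_{oo->1}, and a continuous induction
   (a Gronwall argument needing no differentiability of g) yields
   g(t) <= (g(0) + 2 ||W^(n) - W||_{oo->1}) e^{3|t|}, which tends to 0 uniformly
   for |t| <= T. *)

From HB Require Import structures.
From mathcomp Require Import all_boot all_order all_algebra.
From mathcomp Require Import all_classical all_reals all_analysis.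
From mathcomp Require Import ring lra measurable_realfun.
Import Order.TTheory GRing.Theory Num.Theory.
Import numFieldNormedType.Exports.
Local Open Scope classical_set_scope.
Local Open Scope ring_scope.

Section real_lemmas.
Context {R : realType}.

Lemma sin_lipschitz (a b : R) : `|sin a - sin b| <= `|a - b|.
Proof.
wlog ab : a b / a <= b.
  move=> H; case: (leP a b) => [/H//|/ltW/H]; by rewrite distrC [`|b - a|]distrC.
have [c _ mvt] := @MVT_segment R sin cos a b ab (fun x _ => is_derive_sin x)
  (continuous_subspaceT (@continuous_sin R)).
by rewrite distrC mvt [`|a - b|]distrC normrM ler_piMl ?cos_max.
Qed.

Lemma real_induction (P : R -> Prop) (b : R) : 0 <= b -> P 0 ->
  (forall t, 0 <= t < b -> (forall s, 0 <= s <= t -> P s) ->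
     exists2 del : R, 0 < del & forall s, t <= s < t + del -> P s) ->
  (forall t, 0 < t <= b -> (forall s, 0 <= s < t -> P s) -> P t) ->
  P b.
Proof.
move=> b0 P0 step_right step_left.
pose S := [set t : R | 0 <= t <= b /\ forall s, 0 <= s <= t -> P s].
have S0 : S 0.
  by split=> [|s /andP[s0 s0']]; [rewrite lexx b0|rewrite (@le_anti _ _ s 0) ?s0 ?s0'].
have supS : has_sup S by split; [exists 0|exists b => t [/andP[_]]].
set m := sup S.
have m0 : 0 <= m by apply: sup_upper_bound.
have mb : m <= b by apply: ge_sup; [exists 0|move=> t [/andP[_]]].
have below_m s : 0 <= s < m -> P s.
  case/andP=> s0 sm; have ms0 : 0 < m - s by rewrite subr_gt0.
  have [t [_ Pt] st] := sup_adherent ms0 supS.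
  by apply: Pt; rewrite s0 ltW //; rewrite opprB addrCA subrr addr0 in st.
have upto_m s : 0 <= s <= m -> P s.
  case/andP=> s0; rewrite le_eqVlt => /orP[/eqP->|sm]; last by apply: below_m; rewrite s0.
  have [m0'|m_gt0] := leP m 0; first by rewrite (@le_anti _ _ m 0) ?m0 ?m0'.
  by apply: step_left; rewrite ?m_gt0.
have [bm|mb'] := leP b m.
  have -> : b = m by apply/le_anti; rewrite bm mb.
  by apply: upto_m; rewrite m0 lexx.
have [del del0 Pdel] := step_right m (introT andP (conj m0 mb')) upto_m.
pose e := Num.min del (b - m) / 2.
have e0 : 0 < e by rewrite divr_gt0 // lt_min del0 subr_gt0 mb'.
have [e_del e_bm] : e < del /\ e < b - m.
  have : e < Num.min del (b - m).
    by rewrite /e ltr_pdivrMr // ltr_pMr ?ltr1n ?lt_min ?del0 ?subr_gt0.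
  by rewrite lt_min => /andP.
have : S (m + e).
  split=> [|s /andP[s0 sme]]; first by apply/andP; split; lra.
  have [sm|ms] := leP s m; first by apply: upto_m; rewrite s0.
  by apply: Pdel; apply/andP; split; lra.
move/sup_upper_bound => /(_ supS); rewrite -/m; lra.
Qed.

(* The Dini-derivative form of |g'| <= k g + c, which needs no differentiability. *)
Definition growth_bounded (k c : R) (g : R -> R) : Prop :=
  forall t eps, 0 < eps -> exists2 del : R, 0 < del &
    forall h, `|h| < del -> `|g (t + h) - g t| <= `|h| * (k * g t + c + eps).

Lemma growth_bounded_reflect {k c : R} {g : R -> R} :
  growth_bounded k c g -> growth_bounded k c (fun s => g (- s)).
Proof.
move=> gb t eps eps0; have [del del0 Hdel] := gb (- t) eps eps0.
by exists del => // h hdel; rewrite opprD -(normrN h) Hdel ?normrN.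
Qed.

Lemma growth_bounded_left_le {k c B t : R} {g : R -> R} :
  growth_bounded k c g -> 0 < t -> (forall s, 0 <= s < t -> g s <= B) -> g t <= B.
Proof.
move=> gb t0 g_le; apply/ler_addgt0Pr => e e0.
have [del del0 Hdel] := gb t 1 ltr01.
pose K := `|k * g t + c + 1| + 1.
have K0 : 0 < K by rewrite ltr_pwDr ?normr_ge0.
pose h := Num.min (Num.min del t) (e / K) / 2.
have h0 : 0 < h by rewrite divr_gt0 // !lt_min del0 t0 divr_gt0.
have : h < Num.min (Num.min del t) (e / K).
  by rewrite /h ltr_pdivrMr // ltr_pMr ?ltr1n // !lt_min del0 t0 divr_gt0.
rewrite !lt_min => /andP[/andP[hdel ht] heK].
have := Hdel (- h); rewrite normrN gtr0_norm // => /(_ hdel) /ler_normlP[step _].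
have gB : g (t - h) <= B by apply: g_le; lra.
have hK : h * (k * g t + c + 1) <= h * K.
  by apply: ler_wpM2l; [exact: ltW | rewrite /K (le_trans (ler_norm _)) ?lerDl].
have : h * K < e by rewrite -ltr_pdivlMr.
lra.
Qed.

Lemma growth_bounded_le_expR_ge0 {k c A : R} {g : R -> R} :
  0 <= k -> 0 < A -> c < A -> g 0 <= A -> growth_bounded k c g ->
  forall t, 0 <= t -> g t <= A * expR ((k + 1) * t).
Proof.
move=> k0 A0 cA g0 gb b b0.
have A_le s : 0 <= s -> A <= A * expR ((k + 1) * s).
  move=> s0; rewrite ler_peMr ?(ltW A0) //; apply: le_trans (expR_ge1Dx _).
  by rewrite lerDl mulr_ge0 // addr_ge0.
apply: (@real_induction (fun s => g s <= A * expR ((k + 1) * s))) => //.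
- by rewrite mulr0 expR0 mulr1.
- move=> t /andP[t0 _] le_upto; set M := A * expR ((k + 1) * t).
  have gM : g t <= M by apply: le_upto; rewrite t0 lexx.
  have AM : A <= M := A_le t t0.
  have [del del0 Hdel] := gb t (A - c) (ltac:(by rewrite subr_gt0)).
  exists del => // s /andP[ts sdel]; set h := s - t.
  have h0 : 0 <= h by rewrite subr_ge0.
  have hdel : h < del by rewrite ltrBlDl.
  have := Hdel h; rewrite ger0_norm // subrKC => /(_ hdel) /ler_normlP[_ gs].
  rewrite (_ : (k + 1) * s = (k + 1) * t + (k + 1) * h); last by rewrite /h; ring.
  rewrite expRD mulrA -/M.
  have p1 : h * (k * g t) <= h * (k * M) by rewrite ler_wpM2l // ler_wpM2l.
  have p2 : h * A <= h * M by rewrite ler_wpM2l.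
  have p3 : M * (1 + (k + 1) * h) <= M * expR ((k + 1) * h).
    by rewrite ler_wpM2l ?expR_ge1Dx // (le_trans (ltW A0)).
  lra.
- move=> t /andP[t0 _] le_below; apply: (growth_bounded_left_le gb t0) => s /andP[s0 st].
  apply: le_trans (le_below s _) _; first by rewrite s0.
  by rewrite ler_wpM2l ?(ltW A0) // ler_expR ler_wpM2l ?addr_ge0 // ltW.
Qed.

Lemma growth_bounded_le_expR {k c A : R} {g : R -> R} :
  0 <= k -> 0 < A -> c < A -> g 0 <= A -> growth_bounded k c g ->
  forall t, g t <= A * expR ((k + 1) * `|t|).
Proof.
move=> k0 A0 cA g0 gb t; have [t0|t_lt0] := leP 0 t.
  by rewrite ger0_norm //; exact: (growth_bounded_le_expR_ge0 k0 A0 cA g0 gb).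
have := growth_bounded_le_expR_ge0 k0 A0 cA _ (growth_bounded_reflect gb) (- t).
by rewrite opprK ltr0_norm //; apply; rewrite ?oppr0 // oppr_ge0 ltW.
Qed.

Lemma dist_step_le (a a' b b' fa fb h : R) : h != 0 ->
  `|a' - b'| <= `|a - b|
    + `|h| * (`|fa - fb| + `|(a' - a) / h - fa| + `|(b' - b) / h - fb|).
Proof.
move=> h0; set qa := (a' - a) / h; set qb := (b' - b) / h.
have ea : a' = a + h * qa by rewrite /qa mulrC divfK // addrC subrK.
have eb : b' = b + h * qb by rewrite /qb mulrC divfK // addrC subrK.
have -> : a' - b' = (a - b) + h * ((fa - fb) + (qa - fa) - (qb - fb)).
  by rewrite ea eb; ring.
apply: le_trans (ler_normD _ _) _; rewrite lerD2l normrM ler_wpM2l //.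
by apply: le_trans (ler_normB _ _) _; rewrite lerD2r ler_normD.
Qed.

Lemma cvge0_near_lt {I : Type} {F : set_system I} {FF : Filter F}
    {f : I -> \bar R} {eps : R} :
  0 < eps -> f x @[x --> F] --> 0%E -> \forall x \near F, (f x < eps%:E)%E.
Proof.
move=> eps0 /fine_cvgP[fin /cvgr0Pnorm_lt /(_ eps eps0)]; apply: filterS2 fin => x fx.
by rewrite -(fineK fx) lte_fin => /(le_lt_trans (ler_norm _)).
Qed.

Lemma near_lt_cvge0 {I : Type} {F : set_system I} {FF : Filter F} {f : I -> \bar R} :
  (forall x, 0 <= f x)%E -> (forall eps, 0 < eps -> \forall x \near F, (f x < eps%:E)%E) ->
  f x @[x --> F] --> 0%E.
Proof.
move=> f0 f_lt; have fin x eps : (f x < eps%:E)%E -> f x \is a fin_num.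
  by rewrite ge0_fin_numE // => /lt_trans; apply; rewrite ltry.
apply/fine_cvgP; split; first by apply: filterS (f_lt 1 ltr01) => x /fin.
apply/cvgr0Pnorm_lt => eps eps0; apply: filterS (f_lt eps eps0) => x fx /=.
by rewrite ger0_norm ?fine_ge0 // -lte_fin fineK // (fin _ _ fx).
Qed.

Lemma dnbhs0_ball {P : R -> Prop} : (\forall h \near 0^', P h) ->
  exists2 del : R, 0 < del & forall h, h != 0 -> `|h| < del -> P h.
Proof.
rewrite near_withinE => /nbhs_ballP[del /= del0 Pdel].
by exists del => // h h0 hdel; apply: Pdel => //; rewrite /ball /= sub0r normrN.
Qed.

End real_lemmas.

Section measurable_trig.
Context {d : measure_display} {T : measurableType d} {R : realType}.

Lemma measurable_sin {f : T -> R} : measurable_fun setT f ->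
  measurable_fun setT (fun x => sin (f x)).
Proof. exact: measurableT_comp (continuous_measurable_fun (@continuous_sin R)). Qed.

Lemma measurable_cos {f : T -> R} : measurable_fun setT f ->
  measurable_fun setT (fun x => cos (f x)).
Proof. exact: measurableT_comp (continuous_measurable_fun (@continuous_cos R)). Qed.

End measurable_trig.

Section graphon_bounds.
Context {d : measure_display} {T : measurableType d} {R : realType}.
Implicit Types W : T -> T -> R.

Lemma graphon_measurable_section {W} x : graphon W -> measurable_fun setT (W x).
Proof. by case=> mW _ _; exact: measurable_fun_pair2 x mW. Qed.

Lemma graphon_norm_le1 {W} x y : graphon W -> `|W x y| <= 1.
Proof. by case=> _ _ /(_ x y) /andP[W0 W1]; rewrite ger0_norm. Qed.

Lemma graphonB_norm_le2 {W1 W2} x y : graphon W1 -> graphon W2 ->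
  `|W1 x y - W2 x y| <= 2.
Proof.
move=> g1 g2; apply: le_trans (ler_normB _ _) _.
by have := graphon_norm_le1 x y g1; have := graphon_norm_le1 x y g2; lra.
Qed.

End graphon_bounds.

Section real_integrable.
Context {d : measure_display} {T : measurableType d} {R : realType}.
Context {mu : {measure set T -> \bar R}}.

Lemma integrable_EFin_measurable {f : T -> R} :
  mu.-integrable setT (EFin \o f) -> measurable_fun setT f.
Proof. by move=> if_; apply/measurable_EFinP; exact: measurable_int if_. Qed.

Lemma integrable_EFinB {f g : T -> R} :
  mu.-integrable setT (EFin \o f) -> mu.-integrable setT (EFin \o g) ->
  mu.-integrable setT (EFin \o fun x => f x - g x).
Proof.
by move=> if_ ig; apply: eq_integrable (integrableB measurableT if_ ig).
Qed.

Lemma integrable_EFinD {f g : T -> R} :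
  mu.-integrable setT (EFin \o f) -> mu.-integrable setT (EFin \o g) ->
  mu.-integrable setT (EFin \o fun x => f x + g x).
Proof.
by move=> if_ ig; apply: eq_integrable (integrableD measurableT if_ ig).
Qed.

Lemma integrable_EFinZl {f : T -> R} (k : R) :
  mu.-integrable setT (EFin \o f) -> mu.-integrable setT (EFin \o fun x => k * f x).
Proof. by move=> if_; apply: eq_integrable (integrableZl measurableT k if_). Qed.

Lemma integrable_EFinZr {f : T -> R} (k : R) :
  mu.-integrable setT (EFin \o f) -> mu.-integrable setT (EFin \o fun x => f x * k).
Proof.
by move=> if_; apply: eq_integrable (integrableZr measurableT k if_).
Qed.

Lemma integrable_normB {f g : T -> R} :
  mu.-integrable setT (EFin \o f) -> mu.-integrable setT (EFin \o g) ->
  mu.-integrable setT (EFin \o fun x => `|f x - g x|).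
Proof. by move=> if_ ig; exact: integrable_norm (integrable_EFinB if_ ig). Qed.

Lemma L1dist_fin_num {f g : T -> R} :
  mu.-integrable setT (EFin \o f) -> mu.-integrable setT (EFin \o g) ->
  L1dist mu f g \is a fin_num.
Proof.
by move=> if_ ig; have := integrable_fin_num measurableT (integrable_normB if_ ig).
Qed.

Lemma L1dist_ge0 (f g : T -> R) : (0 <= L1dist mu f g)%E.
Proof. by apply: integral_ge0 => x _; rewrite lee_fin. Qed.

Lemma fine_L1distE (f g : T -> R) : fine (L1dist mu f g) = \int[mu]_x `|f x - g x|.
Proof. by []. Qed.

End real_integrable.

Section kuramoto.
Context {d : measure_display} {T : measurableType d} {R : realType}.
Variable mu : probability T R.
Implicit Types (W : T -> T -> R) (v w : T -> R).

Let mu_setT : (mu : {measure set T -> \bar R}) setT = 1%E.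
Proof. exact: probability_setT. Qed.

Lemma integrable_bounded {f : T -> R} (M : R) : measurable_fun setT f ->
  (forall x, `|f x| <= M) -> mu.-integrable setT (EFin \o f).
Proof.
move=> mf fM; apply: measurable_bounded_integrable => //.
  by rewrite mu_setT ltry.
exists M; split=> [|N MN x _]; first exact: num_real.
exact: le_trans (fM x) (ltW MN).
Qed.

Lemma normr_Rintegral_le {f : T -> R} (M : R) : measurable_fun setT f ->
  (forall x, `|f x| <= M) -> `|\int[mu]_x f x| <= M.
Proof.
move=> mf fM; have if_ := integrable_bounded M mf fM.
apply: le_trans (le_normr_Rintegral measurableT if_) _.
have iM : mu.-integrable setT (EFin \o fun=> M) by apply: (integrable_bounded `|M|).
rewrite (le_trans (le_Rintegral measurableT _ iM (fun x _ => fM x))) //.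
- apply: (integrable_bounded M) => [|x]; last by rewrite normr_id.
  exact: measurableT_comp (@normr_measurable R setT) mf.
- by rewrite (Rintegral_cst mu measurableT) mu_setT mulr1.
Qed.

Lemma integrable_EFin_cst (k : R) : mu.-integrable setT (EFin \o fun=> k).
Proof. exact: (integrable_bounded `|k|). Qed.

Lemma measurable_Rintegral_section (k : T * T -> R) : measurable_fun setT k ->
  measurable_fun setT (fun x => \int[mu]_y k (x, y)).
Proof.
move=> mk; apply: measurableT_comp (measurable_realfun.fine_measurable measurableT) _.
have -> : (fun x => (\int[mu]_y (k (x, y))%:E)%E) =
    (fun x => \int[mu]_y (EFin \o k)^\+ (x, y) - \int[mu]_y (EFin \o k)^\- (x, y))%E.
  apply/funext => x; rewrite integralE; congr (_ - _)%E;
    by apply: eq_integral => y _; rewrite ?funeposE ?funenegE.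
apply: emeasurable_funB; apply: measurable_fun_fubini_tonelli_F => //.
- by apply: measurable_funepos; apply/measurable_EFinP.
- by apply: measurable_funeneg; apply/measurable_EFinP.
Qed.

Lemma integrable_mul_bounded {f g : T -> R} (M N : R) :
  measurable_fun setT f -> measurable_fun setT g ->
  (forall x, `|f x| <= M) -> (forall x, `|g x| <= N) ->
  mu.-integrable setT (EFin \o fun x => f x * g x).
Proof.
move=> mf mg fM gN; apply: (integrable_bounded (M * N)); first exact: measurable_funM.
by move=> x; rewrite normrM ler_pM.
Qed.

Lemma kuramoto_fieldE W v x :
  kuramoto_field mu W v x = \int[mu]_y (W x y * sin (v y - v x)).
Proof. by []. Qed.

Lemma measurable_kuramoto_field {W} {v} : graphon W ->
  measurable_fun setT v -> measurable_fun setT (kuramoto_field mu W v).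
Proof.
case=> mW _ _ mv.
apply: (measurable_Rintegral_section (fun p => W p.1 p.2 * sin (v p.2 - v p.1))).
apply: measurable_funM => //; apply: measurable_sin.
by apply: measurable_funB; apply: measurableT_comp mv _.
Qed.

Lemma integrable_graphon_sin {W} {v} x : graphon W -> measurable_fun setT v ->
  mu.-integrable setT (EFin \o fun y => W x y * sin (v y - v x)).
Proof.
move=> gW mv; apply: (integrable_mul_bounded 1 1).
- exact: graphon_measurable_section.
- by apply: measurable_sin; apply: measurable_funB.
- by move=> y; exact: graphon_norm_le1.
- by move=> y; exact: sin_max.
Qed.

Lemma kuramoto_field_norm_le1 {W} {v} x : graphon W ->
  measurable_fun setT v -> `|kuramoto_field mu W v x| <= 1.
Proof.
move=> gW mv; rewrite kuramoto_fieldE; apply: normr_Rintegral_le.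
  exact: integrable_EFin_measurable (integrable_graphon_sin x gW mv).
move=> y; rewrite normrM -[1]mulr1 ler_pM ?sin_max //; exact: graphon_norm_le1.
Qed.

Lemma integrable_kuramoto_field {W} {v} : graphon W ->
  measurable_fun setT v -> mu.-integrable setT (EFin \o kuramoto_field mu W v).
Proof.
move=> gW mv; apply: (integrable_bounded 1); first exact: measurable_kuramoto_field.
by move=> x; exact: kuramoto_field_norm_le1.
Qed.

Lemma integrable_graphonB_mul {W1 W2} {h : T -> R} x : graphon W1 -> graphon W2 ->
  measurable_fun setT h -> (forall y, `|h y| <= 1) ->
  mu.-integrable setT (EFin \o fun y => (W1 x y - W2 x y) * h y).
Proof.
move=> g1 g2 mh h1; apply: (integrable_mul_bounded 2 1) => // [|y].
  by apply: measurable_funB; exact: graphon_measurable_section.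
exact: graphonB_norm_le2.
Qed.

Lemma kuramoto_field_graphonB {W1 W2} {v} x : graphon W1 -> graphon W2 ->
  measurable_fun setT v ->
  kuramoto_field mu W1 v x - kuramoto_field mu W2 v x =
    cos (v x) * \int[mu]_y ((W1 x y - W2 x y) * sin (v y))
  - sin (v x) * \int[mu]_y ((W1 x y - W2 x y) * cos (v y)).
Proof.
move=> g1 g2 mv.
have iKs := integrable_graphonB_mul x g1 g2 (measurable_sin mv) (fun y => sin_max _).
have iKc := integrable_graphonB_mul x g1 g2 (measurable_cos mv) (fun y => cos_max _).
rewrite !kuramoto_fieldE -!RintegralZl // -!RintegralB ?integrable_graphon_sin
  ?integrable_EFinZl //.
by apply: eq_Rintegral => y _; rewrite sinB; ring.
Qed.

Lemma kuramoto_field_lipschitz {W} {v w} x : graphon W ->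
  mu.-integrable setT (EFin \o v) -> mu.-integrable setT (EFin \o w) ->
  `|kuramoto_field mu W v x - kuramoto_field mu W w x|
    <= fine (L1dist mu v w) + `|v x - w x|.
Proof.
move=> gW iv iw; have mv := integrable_EFin_measurable iv.
have mw := integrable_EFin_measurable iw.
have iWv := integrable_graphon_sin x gW mv; have iWw := integrable_graphon_sin x gW mw.
have ic := integrable_EFin_cst `|v x - w x|.
have -> : `|v x - w x| = \int[mu]_y `|v x - w x|.
  by rewrite Rintegral_cst // mu_setT mulr1.
rewrite !kuramoto_fieldE -RintegralB // fine_L1distE.
rewrite -(RintegralD measurableT (integrable_normB iv iw) ic).
apply: le_trans (le_normr_Rintegral measurableT (integrable_EFinB iWv iWw)) _.
apply: le_Rintegral => [//|||y _].
- exact: integrable_normB.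
- exact: integrable_EFinD (integrable_normB iv iw) ic.
rewrite -mulrBr normrM.
apply: le_trans (ler_pM _ _ (graphon_norm_le1 x y gW) (sin_lipschitz _ _)) _ => //.
by rewrite mul1r (_ : _ - _ = (v y - w y) - (v x - w x)) ?ler_normB //; ring.
Qed.

Section cutnorm.
Context {W1 W2 : T -> T -> R} {h : T -> R}.
Hypotheses (g1 : graphon W1) (g2 : graphon W2).
Hypotheses (mh : measurable_fun setT h) (h1 : forall y, `|h y| <= 1).

Let measurable_kernel_integral :
  measurable_fun setT (fun x => \int[mu]_y ((W1 x y - W2 x y) * h y)).
Proof.
case: g1 g2 => [mW1 _ _] [mW2 _ _].
apply: (measurable_Rintegral_section (fun p => (W1 p.1 p.2 - W2 p.1 p.2) * h p.2)).
by apply: measurable_funM; [exact: measurable_funB | exact: measurableT_comp mh _].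
Qed.

Let normr_kernel_integral_le2 x : `|\int[mu]_y ((W1 x y - W2 x y) * h y)| <= 2.
Proof.
apply: normr_Rintegral_le.
  exact: integrable_EFin_measurable (integrable_graphonB_mul x g1 g2 mh h1).
by move=> y; rewrite normrM -[2]mulr1 ler_pM // graphonB_norm_le2.
Qed.

Lemma integrable_normr_kernel_integral :
  mu.-integrable setT (EFin \o fun x => `|\int[mu]_y ((W1 x y - W2 x y) * h y)|).
Proof.
apply: (integrable_bounded 2) => [|x]; last by rewrite normr_id normr_kernel_integral_le2.
exact: measurableT_comp (@normr_measurable R setT) measurable_kernel_integral.
Qed.

Lemma cutnorm_termE :
  (\int[mu]_x `|\int[mu]_y ((W1 x y - W2 x y) * h y)%:E|)%E
    = (\int[mu]_x `|\int[mu]_y ((W1 x y - W2 x y) * h y)|)%:E.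
Proof.
rewrite fineK ?(integrable_fin_num measurableT integrable_normr_kernel_integral) //.
apply: eq_integral => x _; rewrite EFin_normr_Rintegral //.
exact: integrable_graphonB_mul.
Qed.

Lemma cutnorm_term_le2 :
  \int[mu]_x `|\int[mu]_y ((W1 x y - W2 x y) * h y)| <= 2.
Proof.
apply: le_trans (ler_norm _) _; apply: normr_Rintegral_le => [|x].
  exact: measurableT_comp (@normr_measurable R setT) measurable_kernel_integral.
by rewrite normr_id normr_kernel_integral_le2.
Qed.

End cutnorm.

Lemma cutnorm_inf1_graphonB_ge0 {W1 W2} : graphon W1 -> graphon W2 ->
  (0 <= cutnorm_inf1 mu (fun x y => (W1 x y - W2 x y)%R))%E.
Proof.
move=> g1 g2; have h1 (y : T) : `|(fun=> 0 : R) y| <= 1 by rewrite normr0.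
apply: le_trans (ereal_sup_ubound _); last by exists (fun=> 0).
by rewrite (cutnorm_termE g1 g2 (measurable_cst _) h1) lee_fin Rintegral_ge0.
Qed.

Lemma cutnorm_inf1_graphonB_fin_num {W1 W2} : graphon W1 -> graphon W2 ->
  cutnorm_inf1 mu (fun x y => W1 x y - W2 x y) \is a fin_num.
Proof.
move=> g1 g2; rewrite ge0_fin_numE ?cutnorm_inf1_graphonB_ge0 //.
apply: le_lt_trans (ltry 2); apply: ge_ereal_sup => _ [h [mh h1] <-].
by rewrite (cutnorm_termE g1 g2 mh h1) lee_fin cutnorm_term_le2.
Qed.

Lemma le_cutnorm_inf1 {W1 W2} {h : T -> R} : graphon W1 -> graphon W2 ->
  measurable_fun setT h -> (forall y, `|h y| <= 1) ->
  \int[mu]_x `|\int[mu]_y ((W1 x y - W2 x y) * h y)|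
    <= fine (cutnorm_inf1 mu (fun x y => W1 x y - W2 x y)).
Proof.
move=> g1 g2 mh h1; rewrite -lee_fin (fineK (cutnorm_inf1_graphonB_fin_num g1 g2)).
by rewrite -(cutnorm_termE g1 g2 mh h1); apply: ereal_sup_ubound; exists h.
Qed.

Lemma L1dist_kuramoto_field_le {W1 W2} {v w} : graphon W1 -> graphon W2 ->
  mu.-integrable setT (EFin \o v) -> mu.-integrable setT (EFin \o w) ->
  fine (L1dist mu (kuramoto_field mu W1 v) (kuramoto_field mu W2 w))
    <= 2 * fine (cutnorm_inf1 mu (fun x y => W1 x y - W2 x y))
       + 2 * fine (L1dist mu v w).
Proof.
move=> g1 g2 iv iw; have mv := integrable_EFin_measurable iv.
have mw := integrable_EFin_measurable iw.
set L := fine (L1dist mu v w).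
pose Is x := \int[mu]_y ((W1 x y - W2 x y) * sin (v y)).
pose Ic x := \int[mu]_y ((W1 x y - W2 x y) * cos (v y)).
have iIs := integrable_normr_kernel_integral g1 g2 (measurable_sin mv) (fun y => sin_max _).
have iIc := integrable_normr_kernel_integral g1 g2 (measurable_cos mv) (fun y => cos_max _).
have pointwise x : `|kuramoto_field mu W1 v x - kuramoto_field mu W2 w x|
    <= `|Is x| + `|Ic x| + (`|v x - w x| + L).
  have -> : kuramoto_field mu W1 v x - kuramoto_field mu W2 w x =
      (kuramoto_field mu W1 v x - kuramoto_field mu W2 v x)
      + (kuramoto_field mu W2 v x - kuramoto_field mu W2 w x) by ring.
  apply: le_trans (ler_normD _ _) _; apply: lerD.
    rewrite kuramoto_field_graphonB //; apply: le_trans (ler_normB _ _) _.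
    by apply: lerD; rewrite normrM ler_piMl ?cos_max ?sin_max.
  by rewrite [_ + L]addrC; exact: kuramoto_field_lipschitz.
rewrite fine_L1distE.
apply: le_trans (le_Rintegral measurableT _ _ (fun x _ => pointwise x)) _.
- by apply: integrable_normB; exact: integrable_kuramoto_field.
- apply: integrable_EFinD (integrable_EFinD iIs iIc) _.
  exact: integrable_EFinD (integrable_normB iv iw) (integrable_EFin_cst L).
rewrite !RintegralD ?integrable_EFinD ?integrable_normB ?integrable_EFin_cst //.
rewrite Rintegral_cst // mu_setT mulr1 -fine_L1distE -/L.
rewrite !mulr_natl !mulr2n lerD2r; apply: lerD.
- exact: le_cutnorm_inf1 g1 g2 (measurable_sin mv) (fun y => sin_max _).
- exact: le_cutnorm_inf1 g1 g2 (measurable_cos mv) (fun y => cos_max _).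
Qed.

Lemma L1dist_step_le {A A' B B' Fa Fb : T -> R} {h : R} : h != 0 ->
  mu.-integrable setT (EFin \o A) -> mu.-integrable setT (EFin \o A') ->
  mu.-integrable setT (EFin \o B) -> mu.-integrable setT (EFin \o B') ->
  mu.-integrable setT (EFin \o Fa) -> mu.-integrable setT (EFin \o Fb) ->
  fine (L1dist mu A' B') <= fine (L1dist mu A B)
    + `|h| * (fine (L1dist mu Fa Fb)
              + fine (L1dist mu (fun x => (A' x - A x) / h) Fa)
              + fine (L1dist mu (fun x => (B' x - B x) / h) Fb)).
Proof.
move=> h0 iA iA' iB iB' iFa iFb.
have iqA := integrable_EFinZr h^-1 (integrable_EFinB iA' iA).
have iqB := integrable_EFinZr h^-1 (integrable_EFinB iB' iB).
have pointwise x := dist_step_le (A x) (A' x) (B x) (B' x) (Fa x) (Fb x) h h0.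
rewrite !fine_L1distE.
apply: le_trans (le_Rintegral measurableT _ _ (fun x _ => pointwise x)) _.
- exact: integrable_normB.
- by rewrite ?(integrable_EFinD, integrable_EFinZl, integrable_normB).
by rewrite ?(RintegralD, RintegralZl, integrable_EFinD, integrable_EFinZl,
  integrable_normB).
Qed.

Lemma kuramoto_solutions_growth_bounded {Wa Wb : T -> T -> R} {a b : R -> T -> R} :
  graphon Wa -> graphon Wb -> kuramoto_solution mu Wa a -> kuramoto_solution mu Wb b ->
  growth_bounded 2 (2 * fine (cutnorm_inf1 mu (fun x y => Wa x y - Wb x y)))
    (fun t => fine (L1dist mu (a t) (b t))).
Proof.
move=> ga gb [ia Da] [ib Db] t eps eps0; have eps20 : 0 < eps / 2 by rewrite divr_gt0.
have [del del0 near_t] := dnbhs0_ball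
  (filterI (cvge0_near_lt eps20 (Da t)) (cvge0_near_lt eps20 (Db t))).
exists del => // h hdel; have [->|h0] := eqVneq h 0.
  by rewrite addr0 subrr normr0 mul0r.
have iFa := integrable_kuramoto_field ga (integrable_EFin_measurable (ia t)).
have iFb := integrable_kuramoto_field gb (integrable_EFin_measurable (ib t)).
(* The backward estimate is the forward one read with [- h] in place of [h]. *)
have quotN (c : R -> T -> R) :
    (fun x => (c t x - c (t + h) x) / - h) = (fun x => (c (t + h) x - c t x) / h).
  by apply/funext => x; rewrite invrN mulrN -mulNr opprB.
have fwd := L1dist_step_le h0 (ia t) (ia (t + h)) (ib t) (ib (t + h)) iFa iFb.
have := L1dist_step_le (h := - h) (ltac:(by rewrite oppr_eq0))
  (ia (t + h)) (ia t) (ib (t + h)) (ib t) iFa iFb.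
rewrite normrN !quotN => bwd.
have field := L1dist_kuramoto_field_le ga gb (ia t) (ib t).
have [qa qb] := near_t h h0 hdel.
rewrite -(fineK (L1dist_fin_num _ iFa)) ?lte_fin in qa; last first.
  by apply: integrable_EFinZr; apply: integrable_EFinB; [exact: ia | exact: ia].
rewrite -(fineK (L1dist_fin_num _ iFb)) ?lte_fin in qb; last first.
  by apply: integrable_EFinZr; apply: integrable_EFinB; [exact: ib | exact: ib].
set S := _ + _ + _ in fwd bwd.
have hS : S <= 2 * fine (L1dist mu (a t) (b t))
          + 2 * fine (cutnorm_inf1 mu (fun x y => Wa x y - Wb x y)) + eps.
  apply: le_trans (lerD (lerD field (ltW qa)) (ltW qb)) _.
  by clear; lra.
move/(ler_wpM2l (normr_ge0 h)): hS => hS.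
by apply/ler_normlP; split; clear -fwd bwd hS; lra.
Qed.

Lemma kuramoto_solutions_L1dist_le {Wa Wb : T -> T -> R} {a b : R -> T -> R} :
  graphon Wa -> graphon Wb -> kuramoto_solution mu Wa a -> kuramoto_solution mu Wb b ->
  forall t, fine (L1dist mu (a t) (b t))
    <= (fine (L1dist mu (a 0) (b 0))
        + 2 * fine (cutnorm_inf1 mu (fun x y => Wa x y - Wb x y))) * expR (3 * `|t|).
Proof.
move=> ga gb sa sb t; apply/ler_addgt0Pr => e e0.
set g0 := fine (L1dist mu (a 0) (b 0)).
set c := 2 * fine (cutnorm_inf1 mu (fun x y => Wa x y - Wb x y)).
set E := expR (3 * `|t|); have E0 : 0 < E by rewrite expR_gt0.
have g00 : 0 <= g0 by rewrite fine_ge0 ?L1dist_ge0.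
have c0 : 0 <= c by rewrite mulr_ge0 ?fine_ge0 ?cutnorm_inf1_graphonB_ge0.
have eE0 : 0 < e / E by rewrite divr_gt0.
have gb_ab := kuramoto_solutions_growth_bounded ga gb sa sb.
have A0 : 0 < g0 + c + e / E by lra.
have cA : c < g0 + c + e / E by lra.
have g0A : g0 <= g0 + c + e / E by lra.
have := growth_bounded_le_expR (ler0n _ 2) A0 cA g0A gb_ab t.
rewrite (_ : 2 + 1 = 3 :> R); last by lra.
by rewrite -/E mulrDl divfK ?gt_eqF.
Qed.

End kuramoto.

Theorem corollary6p2 (d : measure_display) (T : measurableType d) (R : realType)
  (mu : probability T R)
  (Wn : nat -> T -> T -> R) (W : T -> T -> R)
  (un : nat -> R -> T -> R) (u : R -> T -> R) :
  (forall n, graphon (Wn n)) -> graphon W ->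
  cutnorm_inf1 mu (fun x y => Wn n x y - W x y) @[n --> \oo] --> 0%E ->
  (forall n, kuramoto_solution mu (Wn n) (un n)) ->
  kuramoto_solution mu W u ->
  L1dist mu (un n 0) (u 0) @[n --> \oo] --> 0%E ->
  (forall t : R, L1dist mu (un n t) (u t) @[n --> \oo] --> 0%E) /\
  (forall (Tm : R) (e : R), 0 < e ->
     \forall n \near \oo, forall t : R, `|t| <= Tm ->
        (L1dist mu (un n t) (u t) < e%:E)%E).
Proof.
move=> gWn gW cut_cvg sn s init_cvg.
have fin n t := L1dist_fin_num ((sn n).1 t) (s.1 t).
have unif (Tm e : R) : 0 < e -> \forall n \near \oo, forall t, `|t| <= Tm ->
    (L1dist mu (un n t) (u t) < e%:E)%E.
  move=> e0; set K := expR (3 * Tm); have K0 : 0 < K by rewrite expR_gt0.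
  have eta0 : 0 < e / K / 3 by rewrite !divr_gt0.
  apply: filterS2 (cvge0_near_lt eta0 init_cvg) (cvge0_near_lt eta0 cut_cvg).
  move=> n; have cut_fin := cutnorm_inf1_graphonB_fin_num mu (gWn n) gW.
  rewrite -(fineK (fin n 0)) -(fineK cut_fin) !lte_fin => g0_lt cut_lt t tTm.
  rewrite -(fineK (fin n t)) lte_fin.
  apply: le_lt_trans (kuramoto_solutions_L1dist_le mu (gWn n) gW (sn n) s t) _.
  have EK : expR (3 * `|t|) <= K by rewrite ler_expR ler_pM2l.
  have L0 : 0 <= fine (L1dist mu (un n 0) (u 0)) by rewrite fine_ge0 ?L1dist_ge0.
  have C0 : 0 <= fine (cutnorm_inf1 mu (fun x y => Wn n x y - W x y)).
    by rewrite fine_ge0 ?cutnorm_inf1_graphonB_ge0.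
  apply: le_lt_trans (ler_wpM2l _ EK) _; first by rewrite addr_ge0 ?mulr_ge0.
  by rewrite -ltr_pdivlMr //; lra.
split=> // t; apply: near_lt_cvge0 => [n|e e0]; first exact: L1dist_ge0.
by apply: filterS (unif `|t| e e0) => n /(_ t (lexx _)).
Qed.
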